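(* Suppose that $A$ is $\nu$-strongly monotone for some $\nu>0$ and let $\bar x$ be the unique element of $\operatorname{zer}(A+B)$ (assumed nonempty). Let the step sizes be $\gamma_n=\frac1{2\nu(n+1)}$ for $n\in\mathbb N$, and let $(x_n)$ be generated by the reflected stochastic forward–backward iteration with these step sizes. Suppose there is a constant $c$ such that $\mathsf E[\|r_n-By_n\|^2\mid\mathcal F_n]\le c$ for all $n\in\mathbb N$. Then $$\mathsf E\big[\|x_n-\bar x\|^2\big]=\mathcal O\big(\log(n+1)/(n+1)\big)\quad (n>n_0),$$ where $n_0$ is the smallest integer such that $n_0>4\nu^{-1}\mu(1+\sqrt2)$.
   Context: $\mathcal H$ is a separable real Hilbert space; $(\Omega,\mathcal F,\mathsf P)$ a probability space. $A:\mathcal H\to2^{\mathcal H}$ is maximally monotone; $B:\mathcal H\to\mathcal H$ is monotone and $\mu$-Lipschitz continuous ($\mu>0$). $A$ is $\nu$-strongly monotone if $\langle x-y,u-v\rangle\ge\nu\|x-y\|^2$ for all $(x,u),(y,v)\in\operatorname{gra}A$. $J_{\gamma A}=(\mathrm{Id}+\gamma A)^{-1}$. Reflected stochastic forward–backward iteration: $x_0,x_{-1}$ are square-integrable $\mathcal H$-valued random variables, and for every $n\in\mathbb N$: $y_n=2x_n-x_{n-1}$; $r_n$ is an $\mathcal H$-valued random variable with $\mathsf E[r_n\mid\mathcal F_n]=By_n$, where $\mathcal F_n=\sigma(x_0,\dots,x_n)$; and $x_{n+1}=J_{\gamma_nA}(x_n-\gamma_nr_n)$. *)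

From HB Require Import structures.
From mathcomp Require Import all_boot all_order all_algebra.
From mathcomp Require Import all_classical all_reals all_analysis.
Set Implicit Arguments. Unset Strict Implicit. Unset Printing Implicit Defensive.
Import Order.TTheory GRing.Theory Num.Theory.
Import numFieldNormedType.Exports.
Local Open Scope classical_set_scope.
Local Open Scope ring_scope.

Section Defs.
Context {R : realType} {H : normedModType R}.

Definition is_inner_product (ip : H -> H -> R) : Prop :=
  [/\ (forall x y, ip x y = ip y x),
      (forall (a : R) x y z, ip (a *: x + y) z = a * ip x z + ip y z)
    & (forall x, ip x x = `|x| ^+ 2)].

Definition separable_space : Prop :=
  exists D : set H, countable D /\ dense D.

(* set-valued operators A : H -> 2^H; u \in A x is written A x u *)
Definition monotone_op (ip : H -> H -> R) (A : H -> set H) : Prop :=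
  forall x y u v, A x u -> A y v -> 0 <= ip (x - y) (u - v).

Definition maximally_monotone (ip : H -> H -> R) (A : H -> set H) : Prop :=
  monotone_op ip A /\
  forall A' : H -> set H, monotone_op ip A' ->
    (forall x u, A x u -> A' x u) -> forall x u, A' x u -> A x u.

Definition strongly_monotone (ip : H -> H -> R) (A : H -> set H) (nu : R) :
  Prop := forall x y u v, A x u -> A y v -> nu * `|x - y| ^+ 2 <= ip (x - y) (u - v).

Definition monotone_fun (ip : H -> H -> R) (B : H -> H) : Prop :=
  forall x y, 0 <= ip (x - y) (B x - B y).

Definition lipschitz_with (B : H -> H) (mu : R) : Prop :=
  forall x y, `|B x - B y| <= mu * `|x - y|.

(* p = J_{g A} z, i.e. z \in p + g A p *)
Definition resolvent_rel (A : H -> set H) (g : R) (z p : H) : Prop :=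
  exists u, A p u /\ z = p + g *: u.

Definition borelH : set (set H) := <<s [set U : set H | open U] >>.

Context {d : measure_display} {T : measurableType d}.

Definition measurable_wrt (F : set (set T)) (X : T -> H) : Prop :=
  forall Bs, borelH Bs -> F (X @^-1` Bs).

Definition random_var (X : T -> H) : Prop := measurable_wrt measurable X.

Definition filtration (x : nat -> T -> H) (n : nat) : set (set T) :=
  <<s [set E | exists k Bs, (k <= n)%N /\ borelH Bs /\ E = x k @^-1` Bs] >>.

Definition square_integrable (P : probability T R) (X : T -> H) : Prop :=
  random_var X /\ (\int[P]_w ((`|X w| ^+ 2)%:E) < +oo)%E.

(* E[r | F] = g for H-valued r (weak/Pettis form, equivalent to Bochner
   conditional expectation in a separable Hilbert space) *)
Definition cond_exp_eq (ip : H -> H -> R) (P : probability T R)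
    (F : set (set T)) (r g : T -> H) : Prop :=
  [/\ random_var r, (\int[P]_w ((`|r w|)%:E) < +oo)%E,
      measurable_wrt F g, (\int[P]_w ((`|g w|)%:E) < +oo)%E &
      forall (h : H) (E : set T), F E ->
        (\int[P]_(w in E) ((ip (r w) h)%:E) = \int[P]_(w in E) ((ip (g w) h)%:E))%E].

(* E[f | F] <= c a.s., for f >= 0 *)
Definition cond_exp_le (P : probability T R) (F : set (set T)) (f : T -> R)
    (c : R) : Prop :=
  forall E : set T, F E -> (\int[P]_(w in E) ((f w)%:E) <= c%:E * P E)%E.

Definition refl_point (x : nat -> T -> H) (xm1 : T -> H) (n : nat) (w : T) : H :=
  2 *: x n w - (if n is k.+1 then x k w else xm1 w).

End Defs.

Definition step_size {R : realType} (nu : R) (n : nat) : R :=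
  (2 * nu * n.+1%:R)^-1.

(* Write e_n = r_n - B y_n for the noise and g_n for the step size. The
   nonexpansive resolvent, the strong monotonicity of A, the monotonicity and
   Lipschitz continuity of B and two Young inequalities give, pointwise,
     (1 + 2 g_n nu - 16 g_n^2 mu^2) |x_{n+1} - xbar|^2 + 5/8 |x_{n+1} - x_n|^2
       <= |x_n - xbar|^2 + 1/8 |x_n - x_{n-1}|^2 + 4 g_n^2 |e_n|^2
          - 2 g_n <e_n, x_n - xbar>.
   The last term has expectation zero: x_n - xbar is F_n-measurable and, H being
   separable, it is uniformly close to countably-valued F_n-measurable variables,
   against which e_n integrates to zero. For g_n = 1 / (2 nu (n + 1)) the quantity
   Phi_n = E|x_n - xbar|^2 + E|x_n - x_{n-1}|^2 / 8 therefore satisfies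
     (1 + 1/(n+1) - K/(n+1)^2) Phi_{n+1} <= Phi_n + C'/(n+1)^2,
   and an induction using ln (m + 1) - ln m >= 1 / (m + 1) yields
   Phi_n = O(ln (n + 1) / (n + 1)). *)

From HB Require Import structures.
From mathcomp Require Import all_boot all_order all_algebra.
From mathcomp Require Import all_classical all_reals all_analysis.
From mathcomp Require Import ring lra.
Import Order.TTheory GRing.Theory Num.Theory.
Import numFieldNormedType.Exports.
Local Open Scope classical_set_scope.
Local Open Scope ring_scope.
Set Implicit Arguments. Unset Strict Implicit. Unset Printing Implicit Defensive.

Section InnerProduct.
Context {R : realType} {H : normedModType R} (ip : H -> H -> R).
Hypothesis ip_inner : is_inner_product ip.
Implicit Types x y z : H.

Lemma ipC x y : ip x y = ip y x. Proof. by case: ip_inner. Qed.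

Lemma ipxx x : ip x x = `|x| ^+ 2. Proof. by case: ip_inner. Qed.

Lemma ipDl x y z : ip (x + y) z = ip x z + ip y z.
Proof. by case: ip_inner => _ ipDZ _; rewrite -[x in LHS]scale1r ipDZ mul1r. Qed.

Lemma ip0l z : ip 0 z = 0.
Proof. by have := ipDl 0 0 z; rewrite addr0; lra. Qed.

Lemma ipZl a x z : ip (a *: x) z = a * ip x z.
Proof. by case: ip_inner => _ ipDZ _; rewrite -[_ *: x]addr0 ipDZ ip0l addr0. Qed.

Lemma ipNl x z : ip (- x) z = - ip x z.
Proof. by rewrite -scaleN1r ipZl mulN1r. Qed.

Lemma ipBl x y z : ip (x - y) z = ip x z - ip y z.
Proof. by rewrite ipDl ipNl. Qed.

Lemma ipDr x y z : ip z (x + y) = ip z x + ip z y.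
Proof. by rewrite ipC ipDl !(ipC _ z). Qed.

Lemma ipZr a x z : ip z (a *: x) = a * ip z x.
Proof. by rewrite ipC ipZl ipC. Qed.

Lemma ipBr x y z : ip z (x - y) = ip z x - ip z y.
Proof. by rewrite ipC ipBl !(ipC _ z). Qed.

Lemma sqr_normD x y : `|x + y| ^+ 2 = `|x| ^+ 2 + 2 * ip x y + `|y| ^+ 2.
Proof. by rewrite -!ipxx ipDl !ipDr (ipC y x); ring. Qed.

Lemma sqr_normB x y : `|x - y| ^+ 2 = `|x| ^+ 2 - 2 * ip x y + `|y| ^+ 2.
Proof. by rewrite sqr_normD normrN -scaleN1r ipZr; ring. Qed.

Lemma ip_polar x y : ip x y = (`|x + y| ^+ 2 - `|x - y| ^+ 2) / 4.
Proof. by rewrite sqr_normD sqr_normB; field. Qed.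

Lemma ip_young x y t : 0 < t -> 2 * ip x y <= t * `|x| ^+ 2 + `|y| ^+ 2 / t.
Proof.
move=> t_gt0; rewrite -(ler_pM2l t_gt0).
have : 0 <= `|t *: x - y| ^+ 2 by rewrite sqr_ge0.
rewrite sqr_normB ipZl normrZ gtr0_norm // exprMn.
have -> : t * (t * `|x| ^+ 2 + `|y| ^+ 2 / t) = t ^+ 2 * `|x| ^+ 2 + `|y| ^+ 2.
  by field; rewrite gt_eqF.
lra.
Qed.

Lemma ip_cauchy_schwarz x y : `|ip x y| <= `|x| * `|y|.
Proof.
have [->|x0] := eqVneq x 0; first by rewrite ip0l !normr0 mul0r.
have [->|y0] := eqVneq y 0; first by rewrite ipC ip0l !normr0 mulr0.
have nx : 0 < `|x| by rewrite normr_gt0.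
have ny : 0 < `|y| by rewrite normr_gt0.
have t_gt0 : 0 < `|y| / `|x| by rewrite divr_gt0.
have e : `|y| / `|x| * `|x| ^+ 2 + `|y| ^+ 2 / (`|y| / `|x|) = 2 * (`|x| * `|y|).
  by field; rewrite ?gt_eqF.
have := ip_young x y t_gt0; have := ip_young (- x) y t_gt0.
rewrite ipNl normrN e ler_norml => ? ?; apply/andP; split; lra.
Qed.

Lemma sqr_normD_le x y : `|x + y| ^+ 2 <= 2 * `|x| ^+ 2 + 2 * `|y| ^+ 2.
Proof. by have := ip_young x y ltr01; rewrite sqr_normD divr1 mul1r; lra. Qed.

End InnerProduct.

Section RandomVariables.
Context {R : realType} {H : normedModType R} {d : measure_display}
  {T : measurableType d}.
Implicit Types (f g : T -> H) (U : set H).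

Lemma borelH_open U : open U -> @borelH R H U.
Proof. exact: sub_sigma_algebra. Qed.

Lemma measurable_wrt_open (F : set (set T)) f : sigma_algebra setT F ->
  (forall U, open U -> F (f @^-1` U)) -> measurable_wrt F f.
Proof.
move=> [F0 FC FU] fU.
suff : @borelH R H `<=` [set B | F (f @^-1` B)] by apply.
apply: smallest_sub => [|U /fU //]; split=> [|A FA|A FA] /=; first by rewrite preimage_set0.
- by rewrite setTD -preimage_setC -setTD; exact: FC.
- by rewrite preimage_bigcup; exact: FU.
Qed.

Lemma random_var_open f : (forall U, open U -> measurable (f @^-1` U)) ->
  random_var f.
Proof. by apply: measurable_wrt_open; exact: sigma_algebra_measurable. Qed.

Lemma measurable_fun_continuous_comp f (phi : H -> R) :
  random_var f -> continuous phi -> measurable_fun setT (phi \o f).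
Proof.
move=> rf cphi.
apply: (measurability _ (measurable_realfun.RGenOInfty.measurableE R)).
move=> _ [_ [a ->] <-]; rewrite setTI comp_preimage.
apply: rf; apply: borelH_open; apply: open_comp; last exact: rray_open.
by move=> v _; exact: cphi.
Qed.

Lemma open_norm_ball U (z : H) : open U -> U z ->
  exists2 t : R, 0 < t & forall y, `|z - y| < t -> U y.
Proof.
rewrite openE => oU Uz; have /nbhs_ballP[t t_gt0 tU] := oU z Uz.
by exists t => // y zy; apply: tU; rewrite -ball_normE.
Qed.

Lemma random_var_contraction f g : random_var g ->
  (forall w w', `|f w - f w'| <= `|g w - g w'|) -> random_var f.
Proof.
move=> rg fg; apply: random_var_open => U oU.
pose S := [set p : T * R | 0 < p.2 /\ forall y, `|f p.1 - y| < p.2 -> U y].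
have -> : f @^-1` U = g @^-1` \bigcup_(p in S) ball (g p.1) p.2.
  apply/seteqP; split=> w /=.
  - move=> Ufw; have [t t_gt0 tU] := open_norm_ball oU Ufw.
    by exists (w, t) => //; exact: ballxx.
  - case=> -[w' t] /= [_ tU]; rewrite -ball_normE /= => gw.
    by apply: tU; exact: le_lt_trans (fg _ _) gw.
apply: rg; apply: borelH_open; apply: bigcup_open => p _; exact: ball_open.
Qed.

Definition dense_seq (e : nat -> H) :=
  forall (z : H) (t : R), 0 < t -> exists j, `|z - e j| < t.

Lemma separable_dense_seq : @separable_space R H -> exists e, dense_seq e.
Proof.
case=> D [/countable_injP[f finj] dD].
exists (fun j => xget 0 [set z | D z /\ f z = j]) => z t t_gt0.
have [y [zy Dy]] : ball z t `&` D !=set0.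
  by apply: dD; [exists z; exact: ballxx | exact: ball_open].
exists (f y); set Y := [set _ | _].
have [DY fY] : Y (xget 0 Y) by apply: (@xgetPex _ 0 Y); exists y.
have -> : xget 0 Y = y by apply: finj; rewrite ?inE.
by rewrite -ball_normE in zy.
Qed.

Lemma normB_lincomb_le (a b : R) (u v u' v' : H) :
  `|(a *: u + b *: v) - (a *: u' + b *: v')| <= `|a| * `|u - u'| + `|b| * `|v - v'|.
Proof.
by rewrite opprD addrACA -!scalerBr; apply: le_trans (ler_normD _ _) _; rewrite !normrZ.
Qed.

Lemma exists_inv_succ_lt (t : R) : 0 < t -> exists k : nat, k.+1%:R^-1 < t.
Proof.
move=> t_gt0; exists (Num.trunc t^-1).
have := truncnS_gt t^-1; set s := t^-1 => ?.
by rewrite -[t]invrK -/s ltf_pV2 ?posrE ?invr_gt0.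
Qed.

(* Without a product Borel structure on H * H, the measurability of a f + b g is
   obtained by covering preimages of open sets with products of balls centered on a
   dense sequence. *)
Section LinearCombination.
Variables (f g : T -> H) (a b : R) (e : nat -> H).
Hypothesis e_dense : dense_seq e.

Let K := `|a| + `|b| + 1.
Let rho (k : nat) : R := k.+1%:R^-1.

Lemma lincomb_preimage_open U : open U ->
  (fun w => a *: f w + b *: g w) @^-1` U =
  \bigcup_i \bigcup_j \bigcup_(k in [set k | forall z,
      `|(a *: e i + b *: e j) - z| < 2 * K * rho k -> U z])
    (f @^-1` ball (e i) (rho k) `&` g @^-1` ball (e j) (rho k)).
Proof.
move=> oU.
have K_gt0 : 0 < K by rewrite /K; have := normr_ge0 a; have := normr_ge0 b; lra.
have rho_gt0 k : 0 < rho k by rewrite invr_gt0.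
have close i j k w : `|e i - f w| < rho k -> `|e j - g w| < rho k ->
    `|(a *: f w + b *: g w) - (a *: e i + b *: e j)| <= K * rho k.
  move=> fi gj; apply: le_trans (normB_lincomb_le _ _ _ _ _ _) _.
  rewrite (distrC (f w)) (distrC (g w)) /K !mulrDl mul1r.
  have := rho_gt0 k; have := normr_ge0 a; have := normr_ge0 b.
  nra.
apply/seteqP; split=> w /=.
- move=> Uw; have [t t_gt0 tU] := open_norm_ball oU Uw.
  have [k kt] := exists_inv_succ_lt (divr_gt0 t_gt0 (mulr_gt0 (ltr0n _ 4) K_gt0)).
  have [i fi] := e_dense (f w) (rho_gt0 k); have [j gj] := e_dense (g w) (rho_gt0 k).
  exists i => //; exists j => //; exists k; last first.
    by rewrite -!ball_normE /= !(distrC (e _)).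
  move=> z iz; apply: tU.
  rewrite (distrC (f w)) (distrC (g w)) in fi gj.
  apply: le_lt_trans (ler_distD (a *: e i + b *: e j) _ _) _.
  rewrite -/(rho k) ltr_pdivlMr ?mulr_gt0 // in kt.
  have := close i j k w fi gj; have := rho_gt0 k; lra.
- case=> i _ [j _ [k /= iU [fi gj]]]; apply: iU.
  rewrite -!ball_normE /= in fi gj.
  rewrite distrC; apply: le_lt_trans (close i j k w fi gj) _.
  have := mulr_gt0 K_gt0 (rho_gt0 k); lra.
Qed.

End LinearCombination.

Lemma random_var_lincomb f g (a b : R) : @separable_space R H ->
  random_var f -> random_var g -> random_var (fun w => a *: f w + b *: g w).
Proof.
move=> /separable_dense_seq[e e_dense] rf rg.
apply: random_var_open => U oU; rewrite (lincomb_preimage_open f g a b e_dense oU).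
do 2 apply: bigcupT_measurable => ?; apply: bigcup_measurable => k _.
by apply: measurableI; [apply: rf | apply: rg]; apply: borelH_open; exact: ball_open.
Qed.

End RandomVariables.

Section SquareIntegrable.
Context {R : realType} {H : normedModType R} (ip : H -> H -> R)
  {d : measure_display} {T : measurableType d} (P : probability T R).
Hypotheses (ip_inner : is_inner_product ip) (H_separable : @separable_space R H).
Implicit Types (f g : T -> H) (u v : T -> R).

Definition Rintegrable u := P.-integrable setT (EFin \o u).

Definition L2 f := random_var f /\ Rintegrable (fun w => `|f w| ^+ 2).

Lemma integral_EFin_Rintegral (D : set T) u : measurable D ->
  P.-integrable D (EFin \o u) -> (\int[P]_(w in D) (u w)%:E)%E = (\int[P]_(w in D) u w)%:E.
Proof. by move=> mD iu; rewrite fineK //; exact: integrable_fin_num. Qed.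

Lemma random_var_cst (h : H) : random_var (fun _ : T => h).
Proof.
move=> Bs _; have [Bh|Bh] := pselect (Bs h).
- by rewrite preimage_cst ifT ?inE.
- by rewrite preimage_cst ifF //; apply/negbTE; rewrite notin_setE.
Qed.

Lemma random_varB f g : random_var f -> random_var g -> random_var (f \- g).
Proof.
move=> rf rg; have := random_var_lincomb 1 (-1) H_separable rf rg.
by under eq_fun do rewrite scale1r scaleN1r.
Qed.

Lemma measurable_norm f : random_var f -> measurable_fun setT (fun w => `|f w|).
Proof. by move=> rf; apply: measurable_fun_continuous_comp rf _; exact: norm_continuous. Qed.

Lemma measurable_sqr_norm f : random_var f -> measurable_fun setT (fun w => `|f w| ^+ 2).
Proof. by move=> rf; apply: measurable_realfun.measurable_funX; exact: measurable_norm. Qed.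

Lemma measurable_ip f g : random_var f -> random_var g ->
  measurable_fun setT (fun w => ip (f w) (g w)).
Proof.
move=> rf rg.
have -> : (fun w => ip (f w) (g w)) = fun w =>
    (`|1 *: f w + 1 *: g w| ^+ 2 - `|1 *: f w + (-1) *: g w| ^+ 2) / 4.
  by apply/funext => w; rewrite (ip_polar ip_inner) !scale1r scaleN1r.
apply: measurable_realfun.measurable_funM; last exact: measurable_cst.
by apply: measurable_realfun.measurable_funB; apply: measurable_sqr_norm;
  exact: random_var_lincomb.
Qed.

Lemma Rintegrable_le u v : measurable_fun setT u -> (forall w, `|u w| <= v w) ->
  Rintegrable v -> Rintegrable u.
Proof.
move=> mu uv iv; apply: (le_integrable measurableT _ _ iv).
- exact/measurable_realfun.measurable_EFinP.
- by move=> w _ /=; rewrite lee_fin (le_trans (uv w)) ?ler_norm.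
Qed.

Lemma RintegrableD u v : Rintegrable u -> Rintegrable v ->
  Rintegrable (fun w => u w + v w).
Proof. exact: integrableD. Qed.

Lemma RintegrableB u v : Rintegrable u -> Rintegrable v ->
  Rintegrable (fun w => u w - v w).
Proof. exact: integrableB. Qed.

Lemma RintegrableZ k u : Rintegrable u -> Rintegrable (fun w => k * u w).
Proof. exact: integrableZl. Qed.

Lemma Rintegrable_cst k : Rintegrable (fun _ => k).
Proof. exact: finite_measure_integrable_cst. Qed.

Lemma L2_cst (h : H) : L2 (fun _ => h).
Proof. by split; [exact: random_var_cst | exact: Rintegrable_cst]. Qed.

Lemma L2_lincomb f g a b : L2 f -> L2 g -> L2 (fun w => a *: f w + b *: g w).
Proof.
move=> [rf jf] [rg jg]; split; first exact: random_var_lincomb.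
apply: (@Rintegrable_le _ (fun w => 2 * a ^+ 2 * `|f w| ^+ 2 + 2 * b ^+ 2 * `|g w| ^+ 2)).
- by apply: measurable_sqr_norm; exact: random_var_lincomb.
- move=> w; rewrite ger0_norm ?sqr_ge0 //.
  apply: le_trans (sqr_normD_le ip_inner _ _) _.
  by rewrite !normrZ !exprMn !real_normK ?num_real // !mulrA.
- by apply: RintegrableD; rewrite -?mulrA; exact: RintegrableZ.
Qed.

Lemma L2B f g : L2 f -> L2 g -> L2 (f \- g).
Proof.
move=> Lf Lg; have := L2_lincomb 1 (-1) Lf Lg.
by under eq_fun do rewrite scale1r scaleN1r.
Qed.

Lemma L2_le f g1 g2 : random_var f -> L2 g1 -> L2 g2 ->
  (forall w, `|f w| <= `|g1 w| + `|g2 w|) -> L2 f.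
Proof.
move=> rf [_ j1] [_ j2] fg; split => //.
apply: (@Rintegrable_le _ (fun w => 2 * `|g1 w| ^+ 2 + 2 * `|g2 w| ^+ 2)).
- exact: measurable_sqr_norm.
- move=> w; rewrite ger0_norm ?sqr_ge0 //.
  have := fg w; have := normr_ge0 (f w); have := normr_ge0 (g1 w).
  have := normr_ge0 (g2 w); have := sqr_ge0 (`|g1 w| - `|g2 w|); nra.
- by apply: RintegrableD; exact: RintegrableZ.
Qed.

Lemma Rintegrable_ip f g : L2 f -> L2 g -> Rintegrable (fun w => ip (f w) (g w)).
Proof.
move=> [rf jf] [rg jg].
apply: (@Rintegrable_le _ (fun w => 2^-1 * `|f w| ^+ 2 + 2^-1 * `|g w| ^+ 2)).
- exact: measurable_ip.
- move=> w; apply: le_trans (ip_cauchy_schwarz ip_inner _ _) _.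
  have := sqr_ge0 (`|f w| - `|g w|); rewrite sqrrB; lra.
- by apply: RintegrableD; exact: RintegrableZ.
Qed.

Lemma Rintegrable_norm f : L2 f -> Rintegrable (fun w => `|f w|).
Proof.
move=> [rf jf].
apply: (@Rintegrable_le _ (fun w => 2^-1 + 2^-1 * `|f w| ^+ 2)).
- exact: measurable_norm.
- move=> w; rewrite normr_id; have := sqr_ge0 (`|f w| - 1); rewrite sqrrB; lra.
- by apply: RintegrableD; [exact: Rintegrable_cst | exact: RintegrableZ].
Qed.

Lemma square_integrable_L2 f : square_integrable P f -> L2 f.
Proof.
case=> rf fint; split => //; apply/integrableP; split.
  exact/measurable_realfun.measurable_EFinP/measurable_sqr_norm.
by rewrite (eq_integral (fun w => (`|f w| ^+ 2)%:E)) // => w _;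
  rewrite /= ger0_norm ?sqr_ge0.
Qed.

End SquareIntegrable.

Section Orthogonality.
Context {R : realType} {H : normedModType R} (ip : H -> H -> R)
  {d : measure_display} {T : measurableType d} (P : probability T R).
Hypotheses (ip_inner : is_inner_product ip) (H_separable : @separable_space R H).
Variables (F : set (set T)) (e : T -> H).
Hypotheses (F_sigma : sigma_algebra setT F) (F_measurable : forall E, F E -> measurable E).
Hypotheses (e_L2 : L2 P e) (e_orth : forall E h, F E -> \int[P]_(w in E) ip (e w) h = 0).

Lemma sigma_algebra_seqDU (B : (set T)^nat) : (forall i, F (B i)) -> forall n, F (seqDU B n).
Proof.
move=> FB n; have [_ FC FU] := F_sigma.
have [_ _ _ FI] := (sigma_algebraP (fun X _ => @subsetT _ X)).1 F_sigma.
rewrite /seqDU setDE; apply: FI => //; rewrite -setTD; apply: FC.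
rewrite -bigcup_mkord bigcup_mkcond; apply: FU => i.
by case: ifP => _; [exact: FB | case: F_sigma].
Qed.

Lemma ip_shift_le (s rho : R) (u y z : H) : `|s| <= 1 -> `|y - z| < rho ->
  s * ip u z <= s * ip u y + rho * `|u|.
Proof.
move=> s_le1 yz; have : `|s * ip u (y - z)| <= rho * `|u|.
  rewrite normrM -[rho * _]mul1r; apply: ler_pM => //.
  apply: le_trans (ip_cauchy_schwarz ip_inner _ _) _.
  by rewrite mulrC ler_wpM2r // ltW.
by rewrite (ipBr ip_inner) mulrBr ler_norml => /andP[]; lra.
Qed.

(* On the F-measurable cell of the points where Z lies within rho of z j, the
   integrand dominates s <e, z j>, whose integral vanishes. *)
Lemma Rintegral_ip_approx_ge0 (Z : T -> H) (s rho : R) : L2 P Z -> measurable_wrt F Z ->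
  `|s| <= 1 -> 0 < rho -> 0 <= \int[P]_w (s * ip (e w) (Z w) + rho * `|e w|).
Proof.
move=> LZ mZ s_le1 rho_gt0; have [z z_dense] := separable_dense_seq H_separable.
pose E := seqDU (fun j => Z @^-1` ball (z j) rho).
have FE : forall j, F (E j).
  by apply: sigma_algebra_seqDU => j; apply: mZ; apply: borelH_open; exact: ball_open.
have mE j : measurable (E j) by exact: F_measurable.
have E_cover : \bigcup_j E j = setT.
  rewrite -seqDU_bigcup_eq; apply/seteqP; split => // w _.
  have [j wj] := z_dense (Z w) _ rho_gt0.
  by exists j => //=; rewrite -ball_normE /= distrC.
pose g w := s * ip (e w) (Z w) + rho * `|e w|.
have ig : Rintegrable P g.
  by apply: RintegrableD; apply: RintegrableZ;
    [exact: Rintegrable_ip | exact: Rintegrable_norm].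
have iS D u : measurable D -> Rintegrable P u -> P.-integrable D (EFin \o u).
  by move=> mD; apply: integrableS measurableT mD (@subsetT _ _).
apply: fine_ge0; rewrite -E_cover integral_bigcup //;
  [| exact: trivIset_seqDU | by rewrite E_cover; exact: ig].
apply: nneseries_ge0 => j _ _.
have ij : Rintegrable P (fun w => ip (e w) (z j)).
  by apply: Rintegrable_ip => //; exact: L2_cst.
apply: le_trans (_ : (\int[P]_(w in E j) (s * ip (e w) (z j))%:E <= _)%E).
  by rewrite integral_EFin_Rintegral ?iS ?RintegralZl ?iS ?e_orth ?mulr0 //;
    exact: RintegrableZ.
apply: le_integral; rewrite ?iS //; first exact: RintegrableZ.
move=> w; rewrite inE lee_fin => /(@subset_seqDU _ _ j w).
by rewrite /= -ball_normE /= distrC; exact: ip_shift_le.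
Qed.

Lemma Rintegral_ip_orthogonal (Z : T -> H) : L2 P Z -> measurable_wrt F Z ->
  \int[P]_w ip (e w) (Z w) = 0.
Proof.
move=> LZ mZ; set I := \int[P]_w _; set M := \int[P]_w `|e w|.
have M_ge0 : 0 <= M by apply: Rintegral_ge0.
have iI := Rintegrable_ip ip_inner H_separable e_L2 LZ.
have iM := Rintegrable_norm e_L2.
have bound rho : 0 < rho -> `|I| <= rho * M.
  move=> rho_gt0; rewrite ler_norml.
  have n1 : `|1 : R| <= 1 by rewrite normr1.
  have nN1 : `|-1 : R| <= 1 by rewrite normrN1.
  have := Rintegral_ip_approx_ge0 LZ mZ n1 rho_gt0.
  have := Rintegral_ip_approx_ge0 LZ mZ nN1 rho_gt0.
  rewrite !RintegralD ?RintegralZl //; try exact: RintegrableZ.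
  rewrite -/I -/M; lra.
apply/eqP; rewrite -normr_le0; apply/ler_addgt0Pr => eps eps_gt0.
have rho_gt0 : 0 < eps / (M + 1) by rewrite divr_gt0 //; lra.
apply: le_trans (bound _ rho_gt0) _.
by rewrite add0r mulrAC ler_pdivrMr ?ler_pM2l //; lra.
Qed.

End Orthogonality.

Section LogRate.
Context {R : realType}.

Lemma inv_succ_le_lnB (m : R) : 0 < m -> (m + 1)^-1 <= ln (m + 1) - ln m.
Proof.
move=> m_gt0; have m1_gt0 : 0 < m + 1 by lra.
have : -1 < - (m + 1)^-1 by rewrite ltrN2 invf_lt1 //; lra.
move=> /le_ln1Dx; have -> : 1 - (m + 1)^-1 = m / (m + 1) by field; lra.
rewrite ln_div ?posrE //; lra.
Qed.

Lemma ln_lt_2sqrt (y : R) : 0 < y -> ln y < 2 * Num.sqrt y.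
Proof.
move=> y_gt0; have s_gt0 : 0 < Num.sqrt y by rewrite sqrtr_gt0.
rewrite -{1}[y]sqr_sqrtr ?ltW // lnXn // mulr2n.
by have := ln_sublinear s_gt0; lra.
Qed.

(* The threshold on m guarantees K ln (m + 1) <= m / 2, through ln y < 2 sqrt y. *)
Lemma log_rate_step_bound (K Cc C m : R) : 0 <= K -> 0 <= Cc -> 4 * Cc <= C ->
  64 * K ^+ 2 + 1 <= m ->
  C * (ln m / m) + Cc / m ^+ 2 <= (1 + m^-1 - K / m ^+ 2) * (C * (ln (m + 1) / (m + 1))).
Proof.
move=> K_ge0 Cc_ge0 CcC Km; have m_ge1 : 1 <= m by have := sqr_ge0 K; lra.
have m_gt0 : 0 < m by lra.
set L0 := ln m; set L1 := ln (m + 1).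
have L_step : 1 <= (m + 1) * (L1 - L0).
  by have := inv_succ_le_lnB m_gt0; rewrite -div1r ler_pdivrMr // -/L0 -/L1; lra.
have KL1 : K * L1 <= m / 2.
  have s8 : 8 * K <= Num.sqrt (m + 1).
    by rewrite -[8 * K]ger0_norm ?mulr_ge0 // -sqrtr_sqr ler_wsqrtr //; nra.
  have := ln_lt_2sqrt (_ : 0 < m + 1); rewrite -/L1 => /(_ ltac:(lra)) L1s.
  have : Num.sqrt (m + 1) ^+ 2 = m + 1 by rewrite sqr_sqrtr //; lra.
  by have := sqrtr_ge0 (m + 1); nra.
rewrite -subr_ge0.
have -> : (1 + m^-1 - K / m ^+ 2) * (C * (L1 / (m + 1))) - (C * (L0 / m) + Cc / m ^+ 2) =
    (C * m * ((m + 1) * (L1 - L0)) - Cc * (m + 1) - K * L1 * C) / (m ^+ 2 * (m + 1)).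
  by field; lra.
apply: divr_ge0; last by rewrite mulr_ge0 ?sqr_ge0 //; lra.
have C_ge0 : 0 <= C by lra.
have : 0 <= C * m * ((m + 1) * (L1 - L0) - 1) by rewrite !mulr_ge0 ?subr_ge0 //; lra.
have : 0 <= C * (m / 2 - K * L1) by rewrite mulr_ge0 ?subr_ge0.
have : 0 <= (C - 4 * Cc) * m by rewrite mulr_ge0 ?subr_ge0 //; lra.
have : 0 <= Cc * (m - 1) by rewrite mulr_ge0 ?subr_ge0.
lra.
Qed.

Lemma log_rate_step (K Cc C m p q : R) : 0 <= K -> 0 <= Cc -> 4 * Cc <= C ->
  64 * K ^+ 2 + 1 <= m -> p <= C * (ln m / m) ->
  (1 + m^-1 - K / m ^+ 2) * q <= p + Cc / m ^+ 2 ->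
  q <= C * (ln (m + 1) / (m + 1)).
Proof.
move=> K_ge0 Cc_ge0 CcC Km pm qp.
have K_lt_m : K < m by have := sqr_ge0 (8 * K - 16^-1); rewrite sqrrB; nra.
have m_gt0 : 0 < m by lra.
have f_gt0 : 0 < 1 + m^-1 - K / m ^+ 2.
  have : K / m ^+ 2 < m^-1.
    by rewrite expr2 invfM mulrA gtr_pMl ?invr_gt0 // ltr_pdivrMr ?mul1r.
  by have := invr_gt0 m; lra.
rewrite -(ler_pM2l f_gt0); apply: le_trans qp _.
by apply: le_trans (log_rate_step_bound K_ge0 Cc_ge0 CcC Km); rewrite lerD2r.
Qed.

(* C bounds the terms up to the threshold N directly, and 4 Cc <= C is all that
   log_rate_step needs beyond it. *)
Lemma log_rate_recursion (K Cc : R) (Phi : nat -> R) : 0 <= K -> 0 <= Cc ->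
  (forall n, 0 <= Phi n) ->
  (forall n, (1 + n.+1%:R^-1 - K / n.+1%:R ^+ 2) * Phi n.+1 <=
             Phi n + Cc / n.+1%:R ^+ 2) ->
  exists C, forall n, (0 < n)%N -> Phi n <= C * (ln n.+1%:R / n.+1%:R).
Proof.
move=> K_ge0 Cc_ge0 Phi_ge0 rec.
pose N := Num.trunc (64 * K ^+ 2 + 1).
have N_gt : 64 * K ^+ 2 + 1 < N.+1%:R by exact: truncnS_gt.
have N_gt0 : (0 < N)%N by rewrite truncn_gt0; have := sqr_ge0 K; lra.
pose h i := Phi i * i.+1%:R / ln i.+1%:R.
pose C := 4 * Cc + \sum_(i < N.+1) h i.
have ln_succ_gt0 i : (0 < i)%N -> 0 < ln (i.+1%:R : R).
  by move=> i_gt0; rewrite ln_gt0 // ltr1n ltnS.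
have h_ge0 i : 0 <= h i by rewrite !mulr_ge0 ?invr_ge0 ?ln_ge0 // ler1n.
exists C; elim=> [//|n IH _].
have [n1N|Nn1] := leqP n.+1 N.
  have -> : Phi n.+1 = h n.+1 * (ln n.+2%:R / n.+2%:R).
    by rewrite /h; field; rewrite !gt_eqF ?ln_succ_gt0.
  rewrite ler_wpM2r ?divr_ge0 ?ln_ge0 ?ler1n // /C (bigD1 (Ordinal (n1N : n.+1 < N.+1)%N)) //=.
  by rewrite addrCA lerDl addr_ge0 ?sumr_ge0 ?mulr_ge0.
have C_ge : 4 * Cc <= C by rewrite lerDl sumr_ge0.
rewrite -natr1; apply: (log_rate_step K_ge0 Cc_ge0 C_ge _ (IH _) (rec n)).
- by apply: ltW (lt_le_trans N_gt _); rewrite ler_nat.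
- by apply: leq_trans N_gt0 _; rewrite -ltnS.
Qed.

End LogRate.

Section Resolvent.
Context {R : realType} {H : normedModType R} (ip : H -> H -> R).
Hypothesis ip_inner : is_inner_product ip.
Variable A : H -> set H.
Hypothesis A_mono : monotone_op ip A.

Lemma resolvent_nonexpansive (g : R) (z z' p p' : H) : 0 <= g ->
  resolvent_rel A g z p -> resolvent_rel A g z' p' -> `|p - p'| <= `|z - z'|.
Proof.
move=> g_ge0 [u [Apu ->]] [u' [Apu' ->]].
have -> : p + g *: u - (p' + g *: u') = (p - p') + g *: (u - u').
  by rewrite opprD addrACA scalerBr.
have := ip_cauchy_schwarz ip_inner (p - p') ((p - p') + g *: (u - u')).
rewrite (ipDr ip_inner) (ipZr ip_inner) (ipxx ip_inner).
have := mulr_ge0 g_ge0 (A_mono Apu Apu'); have := normr_ge0 (p - p').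
have := normr_ge0 (p - p' + g *: (u - u')).
move: (ip _ _) => a; move: `|_ + _| => N; move: `|p - p'| => n.
rewrite ler_norml => ? ? ? /andP[_]; nra.
Qed.

End Resolvent.

Section ReflectedStep.
Context {R : realType} {H : normedModType R} (ip : H -> H -> R).
Hypothesis ip_inner : is_inner_product ip.
Variables (A : H -> set H) (B : H -> H) (nu mu : R) (xbar : H).
Hypotheses (A_strong : strongly_monotone ip A nu) (B_mono : monotone_fun ip B).
Hypotheses (mu_gt0 : 0 < mu) (B_lip : lipschitz_with B mu).
Hypothesis xbar_zero : A xbar (- B xbar).

Lemma resolvent_strong_monotone_ineq (g : R) (x v p : H) : 0 < g ->
  resolvent_rel A g (x - g *: v) p ->
  (1 + 2 * g * nu) * `|p - xbar| ^+ 2 + `|p - x| ^+ 2 <=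
  `|x - xbar| ^+ 2 - 2 * g * ip (p - xbar) (v - B xbar).
Proof.
move=> g_gt0 [u [Apu xv]].
have gu : g *: u = (x - p) - g *: v by rewrite addrAC xv addrAC subrr add0r.
have sm := A_strong Apu xbar_zero; rewrite opprK (ipDr ip_inner) in sm.
have gsm := ler_wpM2l (ltW g_gt0) sm.
have gu_ip : g * ip (p - xbar) u = ip (p - xbar) (x - p) - g * ip (p - xbar) v.
  by rewrite -(ipZr ip_inner) gu (ipBr ip_inner) (ipZr ip_inner).
have polar : 2 * ip (p - xbar) (x - p) =
    `|x - xbar| ^+ 2 - `|p - xbar| ^+ 2 - `|p - x| ^+ 2.
  have -> : x - xbar = (x - p) + (p - xbar) by rewrite addrA subrK.
  by rewrite (sqr_normD ip_inner) -normrN opprB (ipC ip_inner); ring.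
rewrite (ipBr ip_inner); lra.
Qed.

Lemma lipschitz_reflected_sqr (x xp p : H) :
  `|B p - B (2 *: x - xp)| ^+ 2 <= 2 * mu ^+ 2 * (`|p - x| ^+ 2 + `|x - xp| ^+ 2).
Proof.
have pxy : p - (2 *: x - xp) = (p - x) + - (x - xp).
  by rewrite scaler_nat mulr2n !opprB opprD addrA addrACA.
have := sqr_normD_le ip_inner (p - x) (- (x - xp)); rewrite -pxy normrN.
have := B_lip p (2 *: x - xp); have := normr_ge0 (B p - B (2 *: x - xp)).
move: `|B p - _| `|p - (_ - _)| => b n b_ge0 bn n2.
have : b ^+ 2 <= (mu * n) ^+ 2 by rewrite lerXn2r ?nnegrE //; exact: le_trans bn.
rewrite exprMn; have := sqr_ge0 mu; nra.
Qed.

Lemma reflected_step_energy (g : R) (x xp e p : H) : 0 < g ->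
  resolvent_rel A g (x - g *: (B (2 *: x - xp) + e)) p ->
  (1 + 2 * g * nu - 16 * g ^+ 2 * mu ^+ 2) * `|p - xbar| ^+ 2 + 5 / 8 * `|p - x| ^+ 2 <=
  `|x - xbar| ^+ 2 + 1 / 8 * `|x - xp| ^+ 2 + 4 * g ^+ 2 * `|e| ^+ 2
    - 2 * g * ip e (x - xbar).
Proof.
move=> g_gt0 /(resolvent_strong_monotone_ineq g_gt0) energy.
set y := 2 *: x - xp; set d := B p - B y.
have split_ip : ip (p - xbar) (B y + e - B xbar) =
    ip e (x - xbar) + ip (p - x) e - ip (p - xbar) d + ip (p - xbar) (B p - B xbar).
  rewrite /d !(ipBl ip_inner, ipBr ip_inner, ipDl ip_inner, ipDr ip_inner).
  by rewrite !(ipC ip_inner e); ring.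
have Bmono := mulr_ge0 (ltW g_gt0) (B_mono p xbar).
have quarter_gt0 : 0 < 1 / 4 :> R by lra.
have young_e := ip_young ip_inner (p - x) (- g *: e) quarter_gt0.
rewrite (ipZr ip_inner) normrZ normrN gtr0_norm // in young_e.
have t_gt0 : 0 < 16 * g ^+ 2 * mu ^+ 2 by rewrite !mulr_gt0 // exprn_gt0.
have young_d := ip_young ip_inner (p - xbar) (g *: d) t_gt0.
rewrite (ipZr ip_inner) normrZ gtr0_norm // in young_d.
have lip := lipschitz_reflected_sqr x xp p; rewrite -/y -/d in lip.
have ed : (g * `|d|) ^+ 2 / (16 * g ^+ 2 * mu ^+ 2) = `|d| ^+ 2 / (16 * mu ^+ 2).
  by field; rewrite !gt_eqF // ?exprn_gt0.
have ee : (g * `|e|) ^+ 2 / (1 / 4) = 4 * g ^+ 2 * `|e| ^+ 2 by field.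
rewrite ed in young_d; rewrite ee in young_e.
have : `|d| ^+ 2 / (16 * mu ^+ 2) <= (`|p - x| ^+ 2 + `|x - xp| ^+ 2) / 8.
  rewrite ler_pdivrMr ?mulr_gt0 //.
  by rewrite (_ : _ / 8 * _ = 2 * mu ^+ 2 * (`|p - x| ^+ 2 + `|x - xp| ^+ 2)) //; field.
rewrite split_ip in energy; lra.
Qed.

End ReflectedStep.

Section Filtration.
Context {R : realType} {H : normedModType R} {d : measure_display}
  {T : measurableType d}.
Variable x : nat -> T -> H.

Lemma filtration_sigma_algebra n : sigma_algebra setT (filtration x n).
Proof. exact: smallest_sigma_algebra. Qed.

Lemma filtration_setT n : filtration x n setT.
Proof. by have [F0 FC _] := filtration_sigma_algebra n; have := FC _ F0; rewrite setD0. Qed.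

Lemma measurable_wrt_filtration n : measurable_wrt (filtration x n) (x n).
Proof. by move=> Bs Bs_borel; apply: sub_sigma_algebra; exists n, Bs. Qed.

Lemma measurable_wrt_filtration_subr n (h : H) :
  measurable_wrt (filtration x n) (fun w => x n w - h).
Proof.
apply: measurable_wrt_open; first exact: filtration_sigma_algebra.
move=> U oU; apply: (measurable_wrt_filtration (Bs := (fun v => v - h) @^-1` U)).
apply: borelH_open; apply: open_comp => // v _.
by apply: continuousB => //; exact: cst_continuous.
Qed.

Hypothesis x_rv : forall k, random_var (x k).

Lemma filtration_measurable n E : filtration x n E -> measurable E.
Proof.
apply: smallest_sub => [|_ [k [Bs [_ [Bs_borel ->]]]]]; last exact: x_rv.
exact: sigma_algebra_measurable.
Qed.

Lemma random_var_measurable_wrt n (f : T -> H) :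
  measurable_wrt (filtration x n) f -> random_var f.
Proof. by move=> mf Bs Bs_borel; apply: (@filtration_measurable n); exact: mf. Qed.

End Filtration.

Lemma step_size_gt0 {R : realType} (nu : R) n : 0 < nu -> 0 < step_size nu n.
Proof. by move=> nu_gt0; rewrite invr_gt0 !mulr_gt0. Qed.

Section ReflectedStochasticForwardBackward.
Variables (R : realType) (H : normedModType R) (ip : H -> H -> R)
  (d : measure_display) (Omega : measurableType d) (P : probability Omega R)
  (A : H -> set H) (B : H -> H) (mu nu c : R)
  (x : nat -> Omega -> H) (xm1 : Omega -> H) (r : nat -> Omega -> H) (xbar : H).
Hypotheses (ip_inner : is_inner_product ip) (H_separable : @separable_space R H).
Hypotheses (A_mono : monotone_op ip A) (nu_gt0 : 0 < nu).
Hypothesis A_strong : strongly_monotone ip A nu.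
Hypotheses (B_mono : monotone_fun ip B) (mu_gt0 : 0 < mu) (B_lip : lipschitz_with B mu).
Hypothesis xbar_zero : A xbar (- B xbar).
Hypotheses (x0_L2 : square_integrable P (x 0%N)) (xm1_L2 : square_integrable P xm1).
Hypothesis r_rv : forall n, random_var (r n).
Hypothesis r_mean : forall n,
  cond_exp_eq ip P (filtration x n) (r n) (fun w => B (refl_point x xm1 n w)).
Hypothesis r_var : forall n,
  cond_exp_le P (filtration x n) (fun w => `|r n w - B (refl_point x xm1 n w)| ^+ 2) c.
Hypothesis x_step : forall n w,
  resolvent_rel A (step_size nu n) (x n w - step_size nu n *: r n w) (x n.+1 w).

Local Notation gam n := (step_size nu n).
Local Notation xp n w := (if n is k.+1 then x k w else xm1 w).
Local Notation y n w := (refl_point x xm1 n w).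
Local Notation e n w := (r n w - B (refl_point x xm1 n w)).

Lemma gam_ge0 n : 0 <= gam n. Proof. exact/ltW/step_size_gt0. Qed.

Lemma x_random_var n : random_var (x n).
Proof.
elim: n => [|n IH]; first by case: x0_L2.
apply: (random_var_contraction (g := fun w => 1 *: x n w + (- gam n) *: r n w)).
  exact: random_var_lincomb.
move=> w w'; rewrite !scale1r !scaleNr.
exact: (resolvent_nonexpansive ip_inner A_mono (gam_ge0 n) (x_step n w) (x_step n w')).
Qed.

Lemma B_refl_random_var n : random_var (fun w => B (y n w)).
Proof.
by case: (r_mean n) => _ _ /(random_var_measurable_wrt x_random_var).
Qed.

Lemma noise_random_var n : random_var (fun w => e n w).
Proof. exact: (random_varB H_separable (r_rv n) (B_refl_random_var n)). Qed.

Lemma noise_sqr_integral_le n : (\int[P]_w (`|e n w| ^+ 2)%:E <= c%:E)%E.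
Proof.
by have := r_var (filtration_setT (x := x) (n := n)); rewrite probability_setT mule1.
Qed.

Lemma noise_sqr_Rintegrable n : Rintegrable P (fun w => `|e n w| ^+ 2).
Proof.
apply/integrableP; split.
  exact/measurable_realfun.measurable_EFinP/measurable_sqr_norm/noise_random_var.
rewrite (eq_integral (fun w => (`|e n w| ^+ 2)%:E)) => [|w _]; last first.
  by rewrite /= ger0_norm ?sqr_ge0.
exact: le_lt_trans (noise_sqr_integral_le n) (ltry c).
Qed.

Lemma noise_sqr_expect_le n : \int[P]_w `|e n w| ^+ 2 <= c.
Proof.
have := noise_sqr_integral_le n.
by rewrite integral_EFin_Rintegral ?lee_fin //; exact: noise_sqr_Rintegrable.
Qed.

Lemma xbar_resolvent n : resolvent_rel A (gam n) (xbar - gam n *: B xbar) xbar.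
Proof. by exists (- B xbar); rewrite scalerN. Qed.

Lemma L2_step_terms n : L2 P (x n) -> L2 P (fun w => xp n w) ->
  [/\ L2 P (fun w => B (y n w)), L2 P (fun w => e n w) & L2 P (r n)].
Proof.
move=> Lx Lxp.
have Ly : L2 P (fun w => y n w).
  have -> : (fun w => y n w) = fun w => 2 *: x n w + (-1) *: xp n w.
    by apply/funext => w; rewrite scaleN1r.
  exact: (L2_lincomb ip_inner H_separable 2 (-1) Lx Lxp).
have LBy : L2 P (fun w => B (y n w)).
  apply: (L2_le (B_refl_random_var n) (L2_cst P (B xbar))
    (L2_lincomb ip_inner H_separable mu (- mu) Ly (L2_cst P xbar))).
  move=> w; rewrite scaleNr -scalerBr normrZ gtr0_norm //.
  have := B_lip (y n w) xbar; have := ler_distD (B xbar) (B (y n w)) 0.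
  by rewrite !subr0 distrC; lra.
have Le : L2 P (fun w => e n w).
  by split; [exact: noise_random_var | exact: noise_sqr_Rintegrable].
split => //; have -> : r n = fun w => 1 *: e n w + 1 *: B (y n w).
  by apply/funext => w; rewrite !scale1r subrK.
exact: (L2_lincomb ip_inner H_separable 1 1 Le LBy).
Qed.

Lemma L2_iterates n : L2 P (x n) /\ L2 P (fun w => xp n w).
Proof.
elim: n => [|n [Lx Lxp]]; first by split; exact: square_integrable_L2.
split => //; have [_ _ Lr] := L2_step_terms Lx Lxp.
have Lz := L2B ip_inner H_separable (L2_lincomb ip_inner H_separable 1 (- gam n) Lx Lr)
  (L2_cst P (xbar - gam n *: B xbar)).
apply: (L2_le (x_random_var n.+1) (L2_cst P xbar) Lz) => w /=.
rewrite !scale1r scaleNr.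
have := resolvent_nonexpansive ip_inner A_mono (gam_ge0 n) (x_step n w) (xbar_resolvent n).
have := ler_distD xbar (x n.+1 w) 0; rewrite !subr0 distrC; lra.
Qed.

Lemma L2_x n : L2 P (x n). Proof. by case: (L2_iterates n). Qed.
Lemma L2_noise n : L2 P (fun w => e n w).
Proof. by have [Lx Lxp] := L2_iterates n; case: (L2_step_terms Lx Lxp). Qed.

Lemma L2_x_subr n : L2 P (fun w => x n w - xbar).
Proof. exact: (L2B ip_inner H_separable (L2_x n) (L2_cst P xbar)). Qed.

Lemma noise_orthogonal n E (h : H) : filtration x n E -> \int[P]_(w in E) ip (e n w) h = 0.
Proof.
move=> FE; have mE := filtration_measurable x_random_var FE.
have [Lx Lxp] := L2_iterates n; have [LBy _ Lr] := L2_step_terms Lx Lxp.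
have iS f : L2 P f -> P.-integrable E (EFin \o fun w => ip (f w) h).
  move=> Lf; apply: integrableS measurableT mE (@subsetT _ _) _.
  exact: Rintegrable_ip Lf (L2_cst P h).
case: (r_mean n) => _ _ _ _ /(_ h E FE) r_eq.
under eq_Rintegral do rewrite (ipBl ip_inner).
by rewrite RintegralB ?iS // /Rintegral r_eq subrr.
Qed.

Lemma expect_ip_noise_iterate n : \int[P]_w ip (e n w) (x n w - xbar) = 0.
Proof.
apply: (Rintegral_ip_orthogonal ip_inner H_separable (F := filtration x n)).
- exact: filtration_sigma_algebra.
- by move=> E; exact: (filtration_measurable x_random_var).
- exact: L2_noise.
- exact: noise_orthogonal.
- exact: L2_x_subr.
- exact: measurable_wrt_filtration_subr.
Qed.

Lemma iterate_energy n w :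
  (1 + 2 * gam n * nu - 16 * gam n ^+ 2 * mu ^+ 2) * `|x n.+1 w - xbar| ^+ 2
    + 5 / 8 * `|x n.+1 w - x n w| ^+ 2 <=
  `|x n w - xbar| ^+ 2 + 1 / 8 * `|x n w - xp n w| ^+ 2 + 4 * gam n ^+ 2 * `|e n w| ^+ 2
    - 2 * gam n * ip (e n w) (x n w - xbar).
Proof.
apply: (reflected_step_energy ip_inner A_strong B_mono mu_gt0 B_lip xbar_zero).
  exact: step_size_gt0.
by rewrite [B _ + _]addrC /refl_point subrK; exact: x_step.
Qed.

Local Ltac solve_Rintegrable :=
  repeat (apply: RintegrableB || apply: RintegrableD || apply: RintegrableZ || assumption).

Local Notation a n := (\int[P]_w `|x n w - xbar| ^+ 2).
Local Notation D n := (\int[P]_w `|x n w - xp n w| ^+ 2).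

Lemma expect_energy n :
  (1 + 2 * gam n * nu - 16 * gam n ^+ 2 * mu ^+ 2) * a n.+1 + 5 / 8 * D n.+1 <=
  a n + 1 / 8 * D n + 4 * gam n ^+ 2 * c.
Proof.
have ia m : Rintegrable P (fun w => `|x m w - xbar| ^+ 2) by case: (L2_x_subr m).
have iD m : Rintegrable P (fun w => `|x m w - xp m w| ^+ 2).
  by have [Lx Lxp] := L2_iterates m; case: (L2B ip_inner H_separable Lx Lxp).
have ia0 := ia n; have ia1 := ia n.+1; have iD0 := iD n; have iD1 := iD n.+1.
have ie := noise_sqr_Rintegrable n.
have iM : Rintegrable P (fun w => ip (e n w) (x n w - xbar)).
  exact: (Rintegrable_ip ip_inner H_separable (L2_noise n) (L2_x_subr n)).
have energy := le_Rintegral (mu := P) measurableT _ _ (fun w _ => iterate_energy n w).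
rewrite RintegralD ?RintegralB ?RintegralD ?RintegralD ?RintegralZl ?expect_ip_noise_iterate
  in energy.
all: try by solve_Rintegrable.
apply: le_trans (energy _ _) _; last first.
  rewrite mulr0 subr0 lerD2l; apply: ler_wpM2l (noise_sqr_expect_le n).
  by rewrite mulr_ge0 ?sqr_ge0.
all: by solve_Rintegrable.
Qed.

Lemma expect_energy_rescaled n :
  (1 + n.+1%:R^-1 - 4 * mu ^+ 2 / nu ^+ 2 / n.+1%:R ^+ 2) * (a n.+1 + 1 / 8 * D n.+1) <=
  a n + 1 / 8 * D n + c / nu ^+ 2 / n.+1%:R ^+ 2.
Proof.
set K := 4 * mu ^+ 2 / nu ^+ 2; set m : R := n.+1%:R; have m_ge1 : 1 <= m by rewrite ler1n.
have nu_neq0 : nu != 0 by rewrite gt_eqF.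
have n1_neq0 : 1 + n%:R != 0 :> R by rewrite addrC natr1 pnatr_eq0.
have gam_m : gam n = (2 * nu * m)^-1 by [].
have := expect_energy n.
have -> : 2 * gam n * nu = m^-1.
  by rewrite gam_m; field; rewrite n1_neq0 nu_neq0.
have -> : 16 * gam n ^+ 2 * mu ^+ 2 = K / m ^+ 2.
  by rewrite gam_m /K; field; rewrite n1_neq0 nu_neq0.
have -> : 4 * gam n ^+ 2 * c = c / nu ^+ 2 / m ^+ 2.
  by rewrite gam_m; field; rewrite n1_neq0 nu_neq0.
have m_inv_le1 : m^-1 <= 1 by rewrite invf_le1 //; lra.
have K_ge0 : 0 <= K by rewrite /K divr_ge0 ?sqr_ge0 // mulr_ge0 ?sqr_ge0 ?ler0n.
clearbody K m.
have : 0 <= (4 - m^-1 + K / m ^+ 2) * D n.+1.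
  apply: mulr_ge0; last by apply: Rintegral_ge0 => w _; exact: sqr_ge0.
  by have := divr_ge0 K_ge0 (sqr_ge0 m); lra.
lra.
Qed.

Lemma expect_sqr_dist_rate : exists C, forall n, (0 < n)%N ->
  (\int[P]_w (`|x n w - xbar| ^+ 2)%:E <= (C * (ln n.+1%:R / n.+1%:R))%:E)%E.
Proof.
have a_ge0 k : 0 <= a k by apply: Rintegral_ge0 => w _; exact: sqr_ge0.
have D_ge0 k : 0 <= D k by apply: Rintegral_ge0 => w _; exact: sqr_ge0.
have c_ge0 : 0 <= c.
  by apply: le_trans (noise_sqr_expect_le 0); apply: Rintegral_ge0 => w _; exact: sqr_ge0.
have [||n|C rate] := log_rate_recursion (Phi := fun k => a k + 1 / 8 * D k) _ _ _
  expect_energy_rescaled.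
- by rewrite divr_ge0 ?sqr_ge0 // mulr_ge0 ?sqr_ge0 ?ler0n.
- by rewrite divr_ge0 ?sqr_ge0.
- by have := a_ge0 n; have := D_ge0 n; lra.
exists C => n n_gt0; rewrite integral_EFin_Rintegral //; last by case: (L2_x_subr n).
by rewrite lee_fin; apply: le_trans (rate n n_gt0); have := D_ge0 n; lra.
Qed.

End ReflectedStochasticForwardBackward.

Theorem mainTheorem7 (R : realType) (H : completeNormedModType R)
  (ip : H -> H -> R) (d : measure_display) (Omega : measurableType d)
  (P : probability Omega R) (A : H -> set H) (B : H -> H) (mu nu c : R)
  (x : nat -> Omega -> H) (xm1 : Omega -> H) (r : nat -> Omega -> H)
  (xbar : H) (n0 : nat) :
  is_inner_product ip -> @separable_space R H ->
  maximally_monotone ip A -> 0 < nu -> strongly_monotone ip A nu ->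
  monotone_fun ip B -> 0 < mu -> lipschitz_with B mu ->
  A xbar (- B xbar) ->
  square_integrable P (x 0%N) -> square_integrable P xm1 ->
  (forall n, random_var (r n)) ->
  (forall n, cond_exp_eq ip P (filtration x n) (r n)
                         (fun w => B (refl_point x xm1 n w))) ->
  (forall n, cond_exp_le P (filtration x n)
                         (fun w => `|r n w - B (refl_point x xm1 n w)| ^+ 2) c) ->
  (forall n w, resolvent_rel A (step_size nu n)
                 (x n w - step_size nu n *: r n w) (x n.+1 w)) ->
  4 / nu * mu * (1 + Num.sqrt 2) < n0%:R ->
  (forall m : nat, 4 / nu * mu * (1 + Num.sqrt 2) < m%:R -> (n0 <= m)%N) ->
  exists C : R, forall n : nat, (n0 < n)%N ->
    (\int[P]_w ((`|x n w - xbar| ^+ 2)%:E)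
       <= (C * (ln (n.+1%:R) / n.+1%:R))%:E)%E.
Proof.
(* The bound holds for every n >= 1. *)
move=> ip_inner H_sep [A_mono _] nu_gt0 A_strong B_mono mu_gt0 B_lip xbar_zero
  x0_L2 xm1_L2 r_rv r_mean r_var x_step _ _.
have [C rate] := expect_sqr_dist_rate ip_inner H_sep A_mono nu_gt0 A_strong B_mono
  mu_gt0 B_lip xbar_zero x0_L2 xm1_L2 r_rv r_mean r_var x_step.
by exists C => n n0_lt_n; apply: rate; exact: leq_ltn_trans (leq0n n0) n0_lt_n.
Qed.
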